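(* Let $\Pi=\Pi_1\times\cdots\times\Pi_T$ be a class of dynamic treatment regimes. For any integers $s,t$ with $1\le s\le t\le T$ and any $\epsilon>0$, $$N_{d_h}\big((t-s+1)\epsilon,\Pi_{s:t}\big)\le\prod_{\ell=s}^tN_{d_h}(\epsilon,\Pi_\ell).$$
   Context: For each stage $t$, $\mathcal{H}_t$ is a history space with elements $h_t=(\underline a_{t-1},\underline s_t)$; for $\ell\le t$ the sub-history is $h_\ell=(\underline a_{\ell-1},\underline s_\ell)\in\mathcal{H}_\ell$. $\Pi_t$ is a class of measurable maps $\pi_t:\mathcal{H}_t\to\mathcal{A}_t$ (finite action set), $\Pi_{s:t}=\Pi_s\times\cdots\times\Pi_t$ with elements $\pi_{s:t}=(\pi_s,\dots,\pi_t)$. Given points $h_t^{(1)},\dots,h_t^{(n)}\in\mathcal{H}_t$, the Hamming distance is $d_h(\pi_{s:t},\pi'_{s:t})=n^{-1}\sum_{i=1}^n\mathbf{1}\{\pi_s(h_s^{(i)})\ne\pi'_s(h_s^{(i)})\vee\cdots\vee\pi_t(h_t^{(i)})\ne\pi'_t(h_t^{(i)})\}$; $N_{d_h}(\epsilon,\Pi_{s:t},\{h_t^{(i)}\})$ is the smallest number of elements $\pi^{(1)}_{s:t},\pi^{(2)}_{s:t},\dots$ of $\Pi_{s:t}$ such that every $\pi_{s:t}\in\Pi_{s:t}$ has some $\pi^{(j)}_{s:t}$ with $d_h(\pi_{s:t},\pi^{(j)}_{s:t})\le\epsilon$; the $\epsilon$-Hamming covering number $N_{d_h}(\epsilon,\Pi_{s:t})$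 is its supremum over all $n\ge1$ and $h_t^{(1)},\dots,h_t^{(n)}\in\mathcal{H}_t$; $N_{d_h}(\epsilon,\Pi_{t:t})=N_{d_h}(\epsilon,\Pi_t)$. *)

From HB Require Import structures.
From mathcomp Require Import all_boot all_order all_algebra.
From mathcomp Require Import all_classical all_reals ereal.
Unset Printing Implicit Defensive.
Import Order.TTheory GRing.Theory Num.Theory.
Local Open Scope classical_set_scope.
Local Open Scope ring_scope.

Section Covering.
Variable R : realType.

Definition covnum (X : Type) (C : set X) (d : X -> X -> R) (eps : R) : \bar R :=
  ereal_inf [set (k%:R)%:E | k in
    [set k : nat | exists c : 'I_k -> X,
        (forall j, C (c j)) /\ (forall x, C x -> exists j, d x (c j) <= eps)]].

(* Stages are natural numbers; H l is the history space of stage l,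
   A l the finite action set, and proj l t : H t -> H l extracts the
   sub-history h_l from h_t (used for l <= t). *)
Variables (H : nat -> Type) (A : nat -> finType)
          (proj : forall l t : nat, H t -> H l).

Definition dh1 (l n : nat) (pts : 'I_n -> H l) (p q : H l -> A l) : R :=
  (n%:R)^-1 * (#|[set i : 'I_n | p (pts i) != q (pts i)]|)%:R.

Definition stages (s t : nat) := {l : nat | (s <= l <= t)%N}.

Definition policy_tuple (s t : nat) :=
  forall l : stages s t, H (sval l) -> A (sval l).

Definition Pi_range (Pi : forall l, set (H l -> A l)) (s t : nat)
  : set (policy_tuple s t) :=
  [set pi | forall l : stages s t, Pi (sval l) (pi l)].

Definition dh_range (s t n : nat) (pts : 'I_n -> H t) (p q : policy_tuple s t) : R :=
  (n%:R)^-1 * (#|[set i : 'I_n |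
     `[< exists l : stages s t,
           p l (proj (sval l) t (pts i)) != q l (proj (sval l) t (pts i)) >]]|)%:R.

Definition N_range (Pi : forall l, set (H l -> A l)) (s t : nat) (eps : R) : \bar R :=
  ereal_sup [set e | exists (n : nat) (pts : 'I_n -> H t),
     (0 < n)%N /\ e = covnum _ (Pi_range Pi s t) (dh_range s t n pts) eps].

Definition N_stage (Pi : forall l, set (H l -> A l)) (l : nat) (eps : R) : \bar R :=
  ereal_sup [set e | exists (n : nat) (pts : 'I_n -> H l),
     (0 < n)%N /\ e = covnum _ (Pi l) (dh1 l n pts) eps].

End Covering.

From HB Require Import structures.
From mathcomp Require Import all_boot all_order all_algebra.
From mathcomp Require Import all_classical all_reals ereal.
Import Order.TTheory GRing.Theory Num.Theory.
Local Open Scope classical_set_scope.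
Local Open Scope ring_scope.

(* Fix the evaluation points h_t^(1), ..., h_t^(n) and project them to every
   stage l.  A tuple policy differs from another one at a point only if some
   stage differs there, so by the union bound the Hamming distance on
   Pi_{s:t} is at most the sum of the t - s + 1 stage distances.  Hence the
   tuples of elements of eps-covers of the stage classes form a
   (t - s + 1) eps-cover of Pi_{s:t}, of size the product of the stage
   covering numbers; taking suprema over the points gives the bound. *)

Section ExtendedProducts.
Variable R : realType.
Local Open Scope ereal_scope.

Lemma prode_ge1 {I : Type} (r : seq I) {P : pred I} {F : I -> \bar R} :
  (forall i, P i -> 1 <= F i) -> 1 <= \prod_(i <- r | P i) F i.
Proof.
move=> F_ge1; elim/big_ind: _ => // x y x_ge1 y_ge1.
by rewrite -[1]mule1 lee_pmul.
Qed.

Lemma lee_prod (I : Type) (r : seq I) (P : pred I) (F G : I -> \bar R) :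
  (forall i, P i -> 0 <= F i) -> (forall i, P i -> F i <= G i) ->
  \prod_(i <- r | P i) F i <= \prod_(i <- r | P i) G i.
Proof.
move=> F_ge0 FG; suff [] : 0 <= \prod_(i <- r | P i) F i /\
    \prod_(i <- r | P i) F i <= \prod_(i <- r | P i) G i by [].
elim/big_ind2: _ => [|x1 x2 y1 y2 [x1_ge0 x12] [y1_ge0 y12]|i Pi] //.
  by split; [rewrite mule_ge0 | rewrite lee_pmul].
by split; [exact: F_ge0 | exact: FG].
Qed.

Lemma prode_ge1_pinfty {I : finType} {F : I -> \bar R} {i0 : I} :
  (forall i, 1 <= F i) -> F i0 = +oo -> \prod_i F i = +oo.
Proof.
move=> F_ge1 Fi0; rewrite (bigD1 i0) //= Fi0 gt0_mulye //.
exact: lt_le_trans lte01 (prode_ge1 _ (fun i (_ : i != i0) => F_ge1 i)).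
Qed.

End ExtendedProducts.

Section CoveringNumber.
Variables (R : realType) (X : Type) (C : set X) (d : X -> X -> R) (eps : R).

Definition is_cover {F : Type} (c : F -> X) :=
  (forall j, C (c j)) /\ (forall x, C x -> exists j, d x (c j) <= eps).

Local Open Scope ereal_scope.

Lemma covnum_ge0 : 0 <= covnum R X C d eps.
Proof. by apply: le_ereal_inf_tmp => _ [k _ <-]; rewrite lee_fin. Qed.

Lemma covnum_le_card {F : finType} (c : F -> X) :
  is_cover c -> covnum R X C d eps <= #|F|%:R%:E.
Proof.
move=> [cC cover]; apply: ereal_inf_lbound; exists #|F| => //.
exists (c \o enum_val); split => [j|x /cover [j dxj]]; first exact: cC.
by exists (enum_rank j); rewrite /= enum_rankK.
Qed.

Lemma covnum_set0 : C = set0 -> covnum R X C d eps = 0.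
Proof.
move=> C0; apply/le_anti; rewrite covnum_ge0 andbT.
have c : 'I_0 -> X by case.
apply: le_trans (covnum_le_card c _) _; last by rewrite card_ord.
by split=> [[]|x]; rewrite C0.
Qed.

Lemma covnum_ge1 : C !=set0 -> 1 <= covnum R X C d eps.
Proof.
move=> [x Cx]; apply: le_ereal_inf_tmp => _ [k [c [_ cover]] <-].
by rewrite lee_fin ler1n lt0n; apply/eqP => k0; subst k; case: (cover x Cx) => -[].
Qed.

Lemma covnum_attained : covnum R X C d eps < +oo ->
  exists k (c : 'I_k -> X), is_cover c /\ covnum R X C d eps = k%:R%:E.
Proof.
set S := [set k : nat | exists c : 'I_k -> X, is_cover c] => covnum_fin.
have S_inhabited : exists k, `[< S k >].
  apply: contrapT => noS; move: covnum_fin; rewrite /covnum.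
  suff -> : [set k%:R%:E | k in S] = set0 :> set (\bar R) by rewrite ereal_inf0.
  by apply/seteqP; split => // x [k Sk]; case: noS; exists k; apply/asboolP.
case: (ex_minnP S_inhabited) => m /asboolP[c c_cover] m_min.
exists m, c; split => //; apply/le_anti/andP; split.
  by apply: ereal_inf_lbound; exists m => //; exists c.
apply: le_ereal_inf_tmp => _ [k Sk' <-]; rewrite lee_fin ler_nat.
by apply: m_min; apply/asboolP.
Qed.

End CoveringNumber.

Arguments is_cover {R X} C d eps {F} c.
Arguments covnum_le_card {R X C d eps F} c.

(* Classical sets, as in [dh1] and [dh_range]; the proof goes through finsets
   to apply the union bound [card_big_setU]. *)
Lemma card_set_exists_le (T I : finType) (P : I -> T -> bool) :
  (#|[set x : T | `[< exists i, P i x >]]| <= \sum_i #|[set x : T | P i x]|)%N.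
Proof.
have card_union_le := unstable.card_big_setU (index_enum I) xpredT
  (fun i => [set x | P i x]%SET).
have -> : \sum_i #|[set x : T | P i x]| = \sum_i #|[set x | P i x]%SET|.
  apply: eq_bigr => i _; apply: eq_card => x.
  by rewrite inE; apply/idP/idP => [/set_mem|/mem_set].
apply: leq_trans card_union_le; apply/subset_leq_card/fintype.subsetP => x.
by rewrite in_setE => /asboolP[i Pix]; apply/bigcupP; exists i; rewrite ?inE.
Qed.

Lemma card_dffun_ord (I : finType) (k : I -> nat) :
  #|{dffun forall i, 'I_(k i)}| = (\prod_i k i)%N.
Proof.
rewrite card_dep_ffun foldrE big_map big_enum.
by apply: eq_bigr => i _; rewrite card_ord.
Qed.

Section ProductCover.
Variables (R : realType) (I : finType) (X : I -> Type).
Variables (C : forall i, set (X i)) (d : forall i, X i -> X i -> R) (eps : I -> R).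
Variable D : (forall i, X i) -> (forall i, X i) -> R.
Hypothesis D_le_sum : forall x y, D x y <= \sum_i d i (x i) (y i).

Lemma covnum_prod_le :
  (covnum R _ [set x | forall i, C i (x i)] D (\sum_i eps i)
    <= \prod_i covnum R _ (C i) (d i) (eps i))%E.
Proof.
have [[i0 Ci0]|C_neq0] := pselect (exists i, C i = set0).
  rewrite covnum_set0 ?prode_ge0 // => [i _|]; first exact: covnum_ge0.
  by apply/seteqP; split => // x /(_ i0); rewrite Ci0.
have C_ge1 i : (1 <= covnum R _ (C i) (d i) (eps i))%E.
  by apply/covnum_ge1/set0P/eqP => Ci0; apply: C_neq0; exists i.
have [[i0 Ni0]|N_fin] := pselect (exists i, covnum R _ (C i) (d i) (eps i) = +oo%E).
  by rewrite (prode_ge1_pinfty _ C_ge1 Ni0) leey.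
have /fin_all_exists[k /fin_all_exists[c c_cover]] i :
    exists k (c : 'I_k -> X i), is_cover (C i) (d i) (eps i) c /\
      covnum R _ (C i) (d i) (eps i) = k%:R%:E.
  by apply/covnum_attained; rewrite ltey; apply/eqP => Ni; apply: N_fin; exists i.
pose cover (f : {dffun forall i, 'I_(k i)}) i := c i (f i).
apply: le_trans (covnum_le_card cover _) _.
  split=> [f i|x Cx]; first exact: (c_cover i).1.1.
  have /fin_all_exists[f f_close] i : exists j, d i (x i) (c i j) <= eps i.
    exact: (c_cover i).1.2 _ (Cx i).
  exists (finfun f); apply: le_trans (D_le_sum _ _) _.
  by apply: ler_sum => i _; rewrite /cover ffunE.
under eq_bigr do rewrite (c_cover _).2.
by rewrite card_dffun_ord natr_prod prodEFin.
Qed.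

End ProductCover.

Arguments covnum_prod_le {R I X} C d {eps D}.

Definition stages_enum (s t : nat) : seq (stages s t) :=
  pmap insub (index_iota s t.+1).

Lemma stages_enumP (s t : nat) : Finite.axiom (stages_enum s t).
Proof.
apply: Finite.uniq_enumP => [|l]; first by rewrite pmap_sub_uniq ?iota_uniq.
by rewrite mem_pmap_sub mem_index_iota ltnS (valP l).
Qed.

(* Rekeys the countType that [stages s t] inherits from its sig-type body on
   the head [stages], so that the finType instance below can extend it. *)
HB.instance Definition _ (s t : nat) :=
  Countable.copy (stages s t) {l | (s <= l <= t)%N}.
HB.instance Definition _ (s t : nat) :=
  isFinite.Build (stages s t) (stages_enumP s t).

Lemma big_stages {T : Type} {idx : T} (op : Monoid.com_law idx) (s t : nat)
    (F : nat -> T) :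
  \big[op/idx]_(l : stages s t) F (sval l) = \big[op/idx]_(s <= l < t.+1) F l.
Proof.
rewrite -(big_map sval xpredT); apply/perm_big/uniq_perm => [||l].
- by rewrite map_inj_uniq; [exact: index_enum_uniq | exact: val_inj].
- exact: iota_uniq.
rewrite mem_index_iota ltnS; apply/mapP/idP => [[[u uP] _ ->] //|lP].
by exists (exist _ l lP); first exact: (mem_index_enum (exist _ l lP : stages s t)).
Qed.

Section HammingDistance.
Variables (R : realType) (H : nat -> Type) (A : nat -> finType).
Variables (proj : forall l t : nat, H t -> H l) (s t n : nat) (pts : 'I_n -> H t).

Definition stage_pts (l : nat) : 'I_n -> H l := fun i => proj l t (pts i).

Lemma dh_range_le_sum (p q : policy_tuple H A s t) :
  dh_range R H A proj s t n pts p q <=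
    \sum_(l : stages s t) dh1 R H A (sval l) n (stage_pts (sval l)) (p l) (q l).
Proof.
rewrite /dh_range /dh1 -mulr_sumr -natr_sum ler_wpM2l ?invr_ge0 // ler_nat.
exact: card_set_exists_le.
Qed.

Lemma covnum_le_N_stage (Pi : forall l, set (H l -> A l)) (l : nat) (eps : R) :
  (0 < n)%N ->
  (covnum R _ (Pi l) (dh1 R H A l n (stage_pts l)) eps <= N_stage R H A Pi l eps)%E.
Proof. by move=> n_gt0; apply: ereal_sup_ubound; exists n, (stage_pts l). Qed.

End HammingDistance.

Arguments stage_pts {H} proj {t n} pts l.
Arguments dh_range_le_sum {R H A proj s t n} pts p q.

Theorem lemma6 (R : realType) (H : nat -> Type) (A : nat -> finType)
    (proj : forall l t : nat, H t -> H l)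
    (Pi : forall l : nat, set (H l -> A l)) (T s t : nat) (eps : R) :
  (1 <= s)%N -> (s <= t)%N -> (t <= T)%N -> 0 < eps ->
  (N_range R H A proj Pi s t ((t - s + 1)%:R * eps)
    <= \big[mule/1%E]_(s <= l < t.+1) N_stage R H A Pi l eps)%E.
Proof.
move=> _ s_le_t _ _; apply: ge_ereal_sup => _ [n [pts [n_gt0 ->]]].
have -> : (t - s + 1)%:R * eps = \sum_(l : stages s t) eps.
  by rewrite (big_stages _ _ _ (fun=> eps)) sumr_const_nat addn1 subSn // mulr_natl.
pose d (l : stages s t) := dh1 R H A (sval l) n (stage_pts proj pts (sval l)).
apply: le_trans
  (covnum_prod_le (fun l : stages s t => Pi (sval l)) d (dh_range_le_sum pts)) _.
rewrite -big_stages; apply: lee_prod => l _; first exact: covnum_ge0.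
exact: covnum_le_N_stage.
Qed.
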